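(* Let $n_1,n_2,n_3$ be pairwise coprime positive integers forming a minimal system of generators of $\mathcal S=\langle n_1,n_2,n_3\rangle$. Then for every $\{i,j,k\}=\{1,2,3\}$, $$c_k=\min_{\alpha=1,\dots,I_k}\left\{\alpha n_j-[-n_in_k^{-1}]_{n_j}\left\lfloor \frac{\alpha n_k}{[n_in_j^{-1}]_{n_k}}\right\rfloor\right\},\qquad I_k=\left\lceil [-n_in_k^{-1}]_{n_j}\,\frac{[n_in_j^{-1}]_{n_k}}{n_i}\right\rceil .$$
   Context: $\mathbb N$ denotes the nonnegative integers. For integers $a_1,\dots,a_r$, $\langle a_1,\dots,a_r\rangle=\{\sum t_la_l: t_l\in\mathbb N\}$. Minimal system of generators means that no $n_l$ belongs to the monoid generated by the other two. For an integer $m$ and $n\ge 1$, $[m]_n\in\{0,\dots,n-1\}$ denotes the remainder of $m$ upon division by $n$; for $a$ coprime to $n$, the symbol $a^{-1}$ inside $[\cdot]_n$ denotes a multiplicative inverse of $a$ modulo $n$. For $\{i,j,k\}=\{1,2,3\}$, $\mathcal S_k=\{M\in\mathbb N: Mn_k\in\langle n_i,n_j\rangle\}$ and $c_k=\min(\mathcal S_k\setminus\{0\})$ (the minimal relation for $n_k$). *)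

From mathcomp Require Import all_boot all_order all_algebra.
Set Implicit Arguments. Unset Strict Implicit. Unset Printing Implicit Defensive.
Import Order.TTheory GRing.Theory Num.Theory.

Definition in_mon2 (a b x : nat) : Prop := exists t1 t2 : nat, x = t1 * a + t2 * b.

Definition minimal_gens3 (n1 n2 n3 : nat) : Prop :=
  ~ in_mon2 n2 n3 n1 /\ ~ in_mon2 n1 n3 n2 /\ ~ in_mon2 n1 n2 n3.

Definition nth3 (n1 n2 n3 : nat) (i : 'I_3) : nat := nth 0 [:: n1; n2; n3] i.

Definition Sk (ni nj nk M : nat) : Prop := in_mon2 ni nj (M * nk).

Definition is_ck (ni nj nk c : nat) : Prop :=
  0 < c /\ Sk ni nj nk c /\ (forall M, 0 < M -> Sk ni nj nk M -> c <= M).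

Definition remZ (m : int) (n : nat) : nat := absz (m %% Posz n)%Z.

Definition is_inv_mod (n a a' : nat) : Prop := a * a' = 1 %[mod n].

(* Write p = [-n_i n_k^{-1}]_{n_j} and q = [n_i n_j^{-1}]_{n_k}.  Since n_i is not in
   <n_j, n_k>, the relation p n_k + n_i = q n_j holds exactly (not only modulo n_j n_k).
   For g(b) = b n_j - p (b n_k / q) it gives
   g(b) n_k = (b n_k / q) n_i + (b n_k mod q) n_j, so each g(b), b >= 1, is a positive
   element of S_k.  Conversely let M > 0 with M n_k = a n_i + b n_j.  If b >= q, then
   M - p is a smaller positive element of S_k; if b < q, then M = g(b') with
   b' n_j = M + p a, and q M = b' n_i + p b bounds b' by I_k once M <= g(1).
   So every positive element of S_k dominates some g(b) with 1 <= b <= I_k. *)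

From mathcomp Require Import all_boot all_order all_algebra ring zify.
Set Implicit Arguments. Unset Strict Implicit. Unset Printing Implicit Defensive.
Import Order.TTheory GRing.Theory Num.Theory.

Lemma remZ_nat m n : remZ (Posz m) n = m %% n.
Proof. by rewrite /remZ modz_nat. Qed.

Lemma remZ_opp_lt x n : 0 < n -> remZ (- Posz x)%R n < n.
Proof.
move=> n_gt0; rewrite /remZ -ltz_nat gez0_abs ?ltz_pmod ?modz_ge0 //.
by rewrite eqz_nat -lt0n.
Qed.

Lemma dvdn_remZ_opp x n : 0 < n -> n %| remZ (- Posz x)%R n + x.
Proof.
move=> n_gt0; have m_ge0 : (0 <= ((- Posz x)%R %% Posz n)%Z)%R.
  by rewrite modz_ge0 // eqz_nat -lt0n.
rewrite /remZ -[_ + x]/`|Posz (_ + x)|%N PoszD gez0_abs // -[n]/`|Posz n|%N.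
by rewrite -dvdzE; apply/dvdz_mod0P; rewrite modzDml addNr mod0z.
Qed.

Lemma dvdn_inv_mod n a a' m : is_inv_mod n a a' -> n %| m * a -> n %| m.
Proof.
rewrite /is_inv_mod /dvdn => inv_a /eqP dvd_ma.
by rewrite -[m]muln1 -modnMmr -inv_a modnMmr mulnA -modnMml dvd_ma mul0n mod0n.
Qed.

Section KeyRelation.

Variables ni nj nk u v : nat.
Hypotheses (nj_gt0 : 0 < nj) (ni_notin : ~ in_mon2 nj nk ni).
Hypotheses (inv_u : is_inv_mod nj nk u) (inv_v : is_inv_mod nk nj v).

Let p := remZ (- Posz (ni * u))%R nj.
Let q := remZ (Posz (ni * v)) nk.

Lemma dvdn_p_nk_ni : nj %| p * nk + ni.
Proof.
have ni_mod : ni = ni * (nk * u) %[mod nj] by rewrite -modnMmr inv_u modnMmr muln1.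
rewrite /dvdn -modnDmr ni_mod modnDmr.
rewrite [_ + _](_ : _ = (p + ni * u) * nk); last by ring.
by rewrite -modnMml (eqP (dvdn_remZ_opp (ni * u) nj_gt0)) mod0n.
Qed.

Lemma p_nk_ni_eq : p * nk + ni = q * nj.
Proof.
set r := (p * nk + ni) %/ nj; have r_nj : r * nj = p * nk + ni := divnK dvdn_p_nk_ni.
have r_lt : r < nk.
  rewrite ltnNge; apply/negP => nk_le_r; apply: ni_notin.
  exists (r - nk), (nj - p); rewrite !mulnBl.
  have := leq_mul nk_le_r (leqnn nj).
  have := leq_mul (ltnW (remZ_opp_lt (ni * u) nj_gt0)) (leqnn nk).
  by rewrite -/p; move: r_nj; clearbody r; lia.
suff -> : q = r by [].
rewrite /q remZ_nat; apply/esym.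
rewrite -(modn_small r_lt) -[r]muln1 -modnMmr -inv_v modnMmr mulnA r_nj.
by rewrite mulnDl mulnAC modnMDl.
Qed.

End KeyRelation.

Definition ck_term (nj nk p q beta : nat) := beta * nj - p * (beta * nk %/ q).

Section CkTerms.

Variables ni nj nk p q u : nat.
Hypotheses (ni_gt0 : 0 < ni) (ni_notin : ~ in_mon2 nj nk ni).
Hypotheses (inv_u : is_inv_mod nj nk u) (key : p * nk + ni = q * nj).

Local Notation g := (ck_term nj nk p q).
Local Notation I := ((p * q + ni - 1) %/ ni).

Let nj_gt0 : 0 < nj.
Proof. by rewrite lt0n; apply/eqP => nj0; move: key; rewrite nj0 muln0; lia. Qed.

Let q_gt0 : 0 < q.
Proof. by rewrite lt0n; apply/eqP => q0; move: key; rewrite q0 mul0n; lia. Qed.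

Let p_gt0 : 0 < p.
Proof.
rewrite lt0n; apply/eqP => p0; apply: ni_notin; exists q, 0.
by move: key; rewrite p0; lia.
Qed.

Lemma I_gt0 : 0 < I.
Proof.
have pq_gt0 : 0 < p * q by rewrite muln_gt0 p_gt0 q_gt0.
by rewrite divn_gt0 //; lia.
Qed.

Let q_mul_beta_nj beta :
  q * (beta * nj) = q * (p * (beta * nk %/ q)) + (p * (beta * nk %% q) + beta * ni).
Proof.
transitivity (p * (beta * nk) + beta * ni); first by rewrite mulnCA -key; ring.
rewrite {1}(divn_eq (beta * nk) q); ring.
Qed.

Lemma leq_ck_term_sub beta : p * (beta * nk %/ q) <= beta * nj.
Proof. by rewrite -(leq_pmul2l q_gt0) q_mul_beta_nj leq_addr. Qed.

Lemma mul_ck_term beta : q * g beta = beta * ni + p * (beta * nk %% q).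
Proof. by rewrite /ck_term mulnBr q_mul_beta_nj addKn addnC. Qed.

Lemma ck_term_mul_nk beta :
  g beta * nk = (beta * nk %/ q) * ni + (beta * nk %% q) * nj.
Proof.
apply/eqP; rewrite -(eqn_pmul2l q_gt0) mulnA mul_ck_term; apply/eqP.
have beta_nk := divn_eq (beta * nk) q.
set a := beta * nk %/ q in beta_nk *; set t := beta * nk %% q in beta_nk *.
transitivity (ni * (beta * nk) + t * (p * nk)); first ring.
rewrite beta_nk; transitivity (q * (a * ni) + t * (p * nk + ni)); first ring.
by rewrite key; ring.
Qed.

Lemma ck_term_gt0 beta : 0 < beta -> 0 < g beta.
Proof.
move=> beta_gt0; rewrite -(ltn_pmul2l q_gt0) muln0 mul_ck_term.
by rewrite ltn_addr // muln_gt0 beta_gt0.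
Qed.

Lemma Sk_ck_term beta : Sk ni nj nk (g beta).
Proof. by exists (beta * nk %/ q), (beta * nk %% q); apply: ck_term_mul_nk. Qed.

Lemma ck_term_eq M a b : M * nk = a * ni + b * nj -> b < q ->
  exists2 beta, g beta = M & beta * ni + p * b = q * M.
Proof.
move=> M_rel b_lt.
have s_rel : (M + p * a) * nk = (a * q + b) * nj.
  transitivity (M * nk + a * (p * nk)); first ring.
  rewrite M_rel; transitivity (a * (p * nk + ni) + b * nj); first ring.
  by rewrite key; ring.
have dvd_s : nj %| M + p * a by apply: (dvdn_inv_mod inv_u); rewrite s_rel dvdn_mull.
set beta := (M + p * a) %/ nj; have beta_nj : beta * nj = M + p * a := divnK dvd_s.
have beta_nk : beta * nk = a * q + b.
  by apply/eqP; rewrite -(eqn_pmul2r nj_gt0) mulnAC beta_nj s_rel.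
have div_a : beta * nk %/ q = a by rewrite beta_nk divnMDl // divn_small // addn0.
have mod_b : beta * nk %% q = b by rewrite beta_nk modnMDl modn_small.
have g_beta : g beta = M by rewrite /ck_term div_a beta_nj addnK.
by exists beta; rewrite // -g_beta mul_ck_term mod_b.
Qed.

Lemma Sk_sub_p M a b : M * nk = a * ni + b * nj -> q <= b ->
  p < M /\ Sk ni nj nk (M - p).
Proof.
move=> M_rel q_le_b; have qnj_le := leq_mul q_le_b (leqnn nj).
have p_lt : p < M.
  have : p * nk < M * nk by lia.
  by rewrite ltn_mul2r => /andP [].
split=> //; exists a.+1, (b - q); rewrite !mulnBl.
by have := leq_mul (ltnW p_lt) (leqnn nk); lia.
Qed.

Lemma exists_ck_term_le M : 0 < M -> Sk ni nj nk M ->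
  exists2 beta, 0 < beta <= I & g beta <= M.
Proof.
elim/ltn_ind: M => M IH M_gt0 [a [b M_rel]].
have [b_lt | q_le_b] := ltnP b q; last first.
  have [p_lt Sk_Mp] := Sk_sub_p M_rel q_le_b.
  have [|| beta beta_I le_Mp] := IH (M - p) _ _ Sk_Mp; rewrite ?subn_gt0 //; first lia.
  by exists beta; rewrite // (leq_trans le_Mp) ?leq_subr.
have [g1_le | M_lt_g1] := leqP (g 1) M; first by exists 1; rewrite ?I_gt0.
have [beta g_beta beta_rel] := ck_term_eq M_rel b_lt.
exists beta; last by rewrite g_beta.
have beta_gt0 : 0 < beta.
  by case: beta g_beta {beta_rel} => // /esym; rewrite /ck_term !mul0n div0n; lia.
rewrite beta_gt0 leq_divRL //=.
have qM_lt : q * M < q * g 1 by rewrite ltn_pmul2l.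
rewrite mul_ck_term in qM_lt.
have := ltn_pmod (1 * nk) q_gt0; rewrite -(ltn_pmul2l p_gt0) => pt_lt.
lia.
Qed.

Lemma ck_min_formula : exists c alpha,
  is_ck ni nj nk c /\ 0 < alpha <= I /\
  (forall beta, 0 < beta <= I -> g alpha <= g beta) /\ g alpha = c.
Proof.
have one_lt : 1 < I.+1 by rewrite ltnS I_gt0.
case: (@arg_minnP _ (Ordinal one_lt) (fun b : 'I_I.+1 => 0 < b) (fun b => g b)) => //=.
move=> alpha alpha_gt0 alpha_min.
have min_g beta : 0 < beta <= I -> g alpha <= g beta.
  by case/andP=> beta_gt0 beta_le; apply: (alpha_min (Ordinal (beta_le : beta < I.+1))).
exists (g alpha), alpha; split; [|split; [|split]].
- split; first exact: ck_term_gt0.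
  split; first exact: Sk_ck_term.
  move=> M M_gt0 Sk_M; have [beta beta_I le_M] := exists_ck_term_le M_gt0 Sk_M.
  exact: leq_trans (min_g beta beta_I) le_M.
- by rewrite alpha_gt0 -ltnS ltn_ord.
- exact: min_g.
- by [].
Qed.

End CkTerms.

Lemma ck_formula ni nj nk u v : 0 < ni -> 0 < nj -> ~ in_mon2 nj nk ni ->
  is_inv_mod nj nk u -> is_inv_mod nk nj v ->
  let p := remZ (- Posz (ni * u))%R nj in
  let q := remZ (Posz (ni * v)) nk in
  let I := (p * q + ni - 1) %/ ni in
  let f := fun alpha : nat =>
    (Posz (alpha * nj) - Posz (p * ((alpha * nk) %/ q)))%R in
  exists (c alpha : nat),
    is_ck ni nj nk c /\
    1 <= alpha <= I /\
    (forall beta : nat, 1 <= beta <= I -> (f alpha <= f beta)%R) /\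
    f alpha = Posz c.
Proof.
move=> ni_gt0 nj_gt0 ni_notin inv_u inv_v p q I f.
have key : p * nk + ni = q * nj by apply: p_nk_ni_eq.
have f_ck_term beta : f beta = Posz (ck_term nj nk p q beta).
  by rewrite /f subzn // (leq_ck_term_sub ni_gt0 key).
have [c [alpha [ck [alpha_I [alpha_min g_alpha]]]]] :=
  ck_min_formula ni_gt0 ni_notin inv_u key.
exists c, alpha; do 2!split => //; split.
- by move=> beta beta_I; rewrite !f_ck_term lez_nat alpha_min.
- by rewrite f_ck_term g_alpha.
Qed.

Lemma in_mon2C a b x : in_mon2 a b x -> in_mon2 b a x.
Proof. by case=> t1 [t2 ->]; exists t2, t1; rewrite addnC. Qed.

Theorem mainTheorem4 (n1 n2 n3 : nat) :
  0 < n1 -> 0 < n2 -> 0 < n3 ->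
  coprime n1 n2 -> coprime n1 n3 -> coprime n2 n3 ->
  minimal_gens3 n1 n2 n3 ->
  forall i j k : 'I_3, i != j -> j != k -> i != k ->
  let ni := nth3 n1 n2 n3 i in
  let nj := nth3 n1 n2 n3 j in
  let nk := nth3 n1 n2 n3 k in
  forall u v : nat, is_inv_mod nj nk u -> is_inv_mod nk nj v ->
  let p := remZ (- Posz (ni * u))%R nj in   (* [-n_i n_k^{-1}]_{n_j} *)
  let q := remZ (Posz (ni * v)) nk in         (* [n_i n_j^{-1}]_{n_k} *)
  let I := (p * q + ni - 1) %/ ni in      (* ceil (p * q / n_i) *)
  let f := fun alpha : nat =>
    (Posz (alpha * nj) - Posz (p * ((alpha * nk) %/ q)))%R in
  exists (c alpha : nat),
    is_ck ni nj nk c /\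
    1 <= alpha <= I /\
    (forall beta : nat, 1 <= beta <= I -> (f alpha <= f beta)%R) /\
    f alpha = Posz c.
Proof.
(* Only coprimality of n_j and n_k matters, and the inverse u already witnesses it. *)
move=> n1_gt0 n2_gt0 n3_gt0 _ _ _ [n1_notin [n2_notin n3_notin]] i j k ij jk ik.
have nth3_gt0 (x : 'I_3) : 0 < nth3 n1 n2 n3 x by case: x => [[|[|[|x]]] ?].
have ni_notin : ~ in_mon2 (nth3 n1 n2 n3 j) (nth3 n1 n2 n3 k) (nth3 n1 n2 n3 i).
  move: ij jk ik; case: i => [[|[|[|i]]] ?] //; case: j => [[|[|[|j]]] ?] //;
  case: k => [[|[|[|k]]] ?] // _ _ _; rewrite /nth3 /=; by [|move/in_mon2C].
move=> ni nj nk u v inv_u inv_v.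
exact: ck_formula (nth3_gt0 i) (nth3_gt0 j) ni_notin inv_u inv_v.
Qed.
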